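(* Let $k\geq 2$ and let $G$ be a finite bipartite graph with $d(G)\geq k$. Then $G$ contains a subgraph $H$, bipartite with vertex classes $A$ and $B$, such that $d(H)\geq k/4$, $d_H(v)\leq k$ for every $v\in A$, and either (1) $|A|\geq k^6|B|$, or (2) $\Delta(H)\leq k^7$.
   Context: $d(F)=2e(F)/|V(F)|$ is the average degree, $d_H(v)$ the degree of $v$ in $H$, and $\Delta(H)$ the maximum degree of $H$. *)

(* A finite simple graph is a symmetric irreflexive relation
   on a finType; a (sub)graph is given by a vertex set V and an edge relation r. *)
From HB Require Import structures.
From mathcomp Require Import all_boot all_order all_algebra.
Set Implicit Arguments. Unset Strict Implicit. Unset Printing Implicit Defensive.
Import Order.TTheory GRing.Theory Num.Theory.

Section Graphs.
Variable T : finType.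

Definition simple_graph (e : rel T) : Prop := symmetric e /\ irreflexive e.

Definition edges (V : {set T}) (r : rel T) : {set {set T}} :=
  [set E : {set T} | [exists x in V, exists y in V,
     [&& x != y, r x y & E == [set x; y]]]].

Definition deg (V : {set T}) (r : rel T) (v : T) : nat := #|[set u in V | r v u]|.

Definition maxdeg (V : {set T}) (r : rel T) : nat := \max_(v in V) deg V r v.

Definition avg_deg (R : realFieldType) (V : {set T}) (r : rel T) : R :=
  ((2 * #|edges V r|)%:R / #|V|%:R)%R.

Definition subgraph (VH : {set T}) (rH : rel T) (V : {set T}) (r : rel T) : Prop :=
  [/\ VH \subset V, symmetric rH &
      forall x y, rH x y -> [/\ x \in VH, y \in VH & r x y]].

Definition bipartite_with (V : {set T}) (r : rel T) (A B : {set T}) : Prop :=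
  [/\ A :&: B = set0, A :|: B = V &
      forall x y, x \in V -> y \in V -> r x y ->
        ((x \in A) && (y \in B)) || ((x \in B) && (y \in A))].

Definition bipartite (V : {set T}) (r : rel T) : Prop :=
  exists A B, bipartite_with V r A B.

End Graphs.

From HB Require Import structures.
From mathcomp Require Import all_boot all_order all_algebra.
From mathcomp Require Import lra zify.
Import Order.TTheory GRing.Theory Num.Theory.
Set Implicit Arguments. Unset Strict Implicit. Unset Printing Implicit Defensive.

(* For the bipartition (P, Q) the hypothesis says e(P, Q) >= (k/2)(|P| + |Q|).
   A pair X ⊆ P, Y ⊆ Q maximising e(X, Y) - (k/2)(|X| + |Y|) is nonempty and
   every vertex in it has at least k/2 neighbours on the other side.  Let X be
   the larger side and m = ceil(k/2) <= k.  Keeping m edges at each x in X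
   leaves m|X| edges; call y in Y heavy if it keeps more than k^7 of them.  If
   the heavy vertices carry half of the edges, there are at most
   m|X|/k^7 <= |X|/k^6 of them and X with the heavy vertices gives (1);
   otherwise X with the light vertices gives (2).  Either way at least m|X|/2
   edges on at most 2|X| vertices give average degree at least m/2 >= k/4. *)

Section Counting.
Variable T : finType.
Implicit Types (V A B X Y : {set T}) (r e : rel T).

Lemma cards_sum A (p : pred T) : #|[set x in A | p x]| = \sum_(x in A) p x.
Proof. by rewrite -sum1_card -big_mkcondr; apply: eq_bigl => x; rewrite inE. Qed.

Lemma exists_subset_card A m : m <= #|A| -> exists2 B : {set T}, B \subset A & #|B| = m.
Proof.
move=> /card_geqP [s [s_uniq s_size sA]].
exists [set x in s]; first by apply/subsetP => x; rewrite inE => /sA.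
by rewrite cardsE (card_uniqP s_uniq).
Qed.

Lemma bipartite_disj V r A B x : bipartite_with V r A B -> x \in A -> x \in B -> False.
Proof. by case=> /setP/(_ x) + _ _ xA xB; rewrite !inE xA xB. Qed.

Lemma bipartite_nbr V r A B x y : bipartite_with V r A B ->
  x \in B -> y \in V -> r x y -> y \in A.
Proof.
move=> bip xB yV rxy; have [_ ABV rAB] := bip.
have xV : x \in V by rewrite -ABV inE xB orbT.
case/orP: (rAB x y xV yV rxy) => /andP [xA yB] //.
by case: (bipartite_disj bip xA xB).
Qed.

Lemma card_edges_bipartite V r A B : symmetric r -> bipartite_with V r A B ->
  #|edges V r| = \sum_(b in B) deg V r b.
Proof.
move=> r_sym bip; have [_ ABV r_AB] := bip.
have BV : B \subset V by rewrite -ABV subsetUr.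
pose S := [set p : T * T | [&& p.1 \in B, p.2 \in V & r p.1 p.2]].
have S_A p : p \in S -> p.2 \in A.
  by rewrite inE => /and3P [xB yV rxy]; apply: (bipartite_nbr bip xB yV rxy).
have S_B p : p \in S -> p.1 \in B by rewrite inE => /and3P [].
have -> : edges V r = [set [set p.1; p.2] | p in S].
  apply/setP => E; apply/idP/imsetP.
  - rewrite inE => /exists_inP [x xV /exists_inP [y yV /and3P [_ rxy /eqP ->]]].
    case/orP: (r_AB x y xV yV rxy) => [/andP [_ yB] | /andP [xB _]].
    + by exists (y, x); [rewrite inE /= yB xV r_sym | rewrite /= setUC].
    + by exists (x, y); rewrite // inE /= xB yV.
  - move=> [[x y] pS ->]; have yA := S_A _ pS.
    move: pS; rewrite inE /= => /and3P [xB yV rxy].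
    rewrite inE; apply/exists_inP; exists x; first exact: (subsetP BV).
    apply/exists_inP; exists y; rewrite // rxy eqxx !andbT.
    by apply/eqP => exy; apply: (bipartite_disj bip yA); rewrite -exy.
rewrite card_in_imset.
  rewrite -sum1_card.
  rewrite (eq_bigl (fun p : T * T => (p.1 \in B) && ((p.2 \in V) && r p.1 p.2))); last first.
    by move=> p; rewrite inE.
  rewrite -(pair_big_dep (mem B) (fun x y => (y \in V) && r x y) (fun _ _ => 1%N)).
  by apply: eq_bigr => b _; rewrite /deg -sum1_card; apply: eq_bigl => u; rewrite inE.
move=> [x1 y1] [x2 y2] p1S p2S /= E12.
have [x1B x2B] := (S_B _ p1S, S_B _ p2S); have [y1A y2A] := (S_A _ p1S, S_A _ p2S).
have : x1 \in [set x2; y2] by rewrite -E12 !inE eqxx.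
rewrite !inE => /orP [/eqP ex|/eqP ey]; last by case: (bipartite_disj bip y2A); rewrite -ey.
have : y1 \in [set x2; y2] by rewrite -E12 !inE eqxx orbT.
rewrite !inE => /orP [/eqP ex'|/eqP ey]; last by rewrite ex ey.
by case: (bipartite_disj bip y1A); rewrite ex' /=.
Qed.

Lemma deg_bipartite V r A B b : bipartite_with V r A B -> b \in B ->
  deg V r b = deg A r b.
Proof.
move=> bip bB; have [_ ABV _] := bip.
apply: eq_card => u; rewrite !inE; apply: andb_id2r => rbu.
apply/idP/idP => [uV | uA]; first exact: (bipartite_nbr bip bB uV rbu).
by rewrite -ABV inE uA.
Qed.

Lemma card_bipartite V r A B : bipartite_with V r A B -> #|V| = (#|A| + #|B|)%N.
Proof. by case=> AB0 <- _; rewrite cardsU AB0 cards0 subn0. Qed.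

Lemma avg_deg_bipartite (R : realFieldType) V r A B :
  symmetric r -> bipartite_with V r A B ->
  avg_deg R V r = ((2 * \sum_(b in B) deg V r b)%:R / (#|A| + #|B|)%:R)%R.
Proof.
by move=> r_sym bip; rewrite /avg_deg (card_edges_bipartite r_sym bip) (card_bipartite bip).
Qed.

Definition cross_count e X Y : nat := \sum_(x in X) deg Y e x.

Lemma cross_countC e X Y : symmetric e -> cross_count e X Y = cross_count e Y X.
Proof.
move=> e_sym; rewrite /cross_count.
under eq_bigr do rewrite /deg cards_sum; under [RHS]eq_bigr do rewrite /deg cards_sum.
by rewrite exchange_big; apply: eq_bigr => y _; apply: eq_bigr => x _; rewrite e_sym.
Qed.

Lemma cross_countD1 e X Y x : x \in X ->
  cross_count e X Y = (deg Y e x + cross_count e (X :\ x) Y)%N.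
Proof. exact: big_setD1. Qed.

End Counting.

Local Open Scope ring_scope.

Section DenseCore.
Variables (R : realFieldType) (T : finType) (e : rel T) (c : R).
Hypothesis e_sym : symmetric e.
Implicit Types X Y P Q : {set T}.

Definition excess X Y : R := (cross_count e X Y)%:R - c * (#|X| + #|Y|)%:R.

Lemma excessC X Y : excess X Y = excess Y X.
Proof. by rewrite /excess cross_countC // addnC. Qed.

Lemma excess0 : excess set0 set0 = 0.
Proof. by rewrite /excess /cross_count big_set0 cards0 mulr0 subr0. Qed.

Lemma excess_setD1 X Y x : x \in X -> excess (X :\ x) Y <= excess X Y ->
  c <= (deg Y e x)%:R.
Proof.
move=> xX; rewrite /excess [in X in _ <= X](cross_countD1 _ _ xX).
by rewrite (cardsD1 x X) xX add1n -addn1 !natrD; lra.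
Qed.

Lemma dense_core P Q : P :|: Q != set0 -> 0 <= excess P Q ->
  exists X Y, [/\ X \subset P, Y \subset Q, X :|: Y != set0,
    {in X, forall x, c <= (deg Y e x)%:R} & {in Y, forall y, c <= (deg X e y)%:R}].
Proof.
move=> PQ0 excessPQ.
pose admissible (p : {set T} * {set T}) := (p.1 \subset P) && (p.2 \subset Q).
have [[X Y] /andP [/= XP YQ] maxXY] : exists2 p, admissible p &
    forall p', admissible p' -> excess p'.1 p'.2 <= excess p.1 p.2.
  have admissiblePQ : admissible (P, Q) by rewrite /admissible !subxx.
  by case: (arg_maxP (fun p => excess p.1 p.2) admissiblePQ) => p; exists p.
(* An empty maximiser makes (P, Q), of nonnegative excess, a maximiser too. *)
wlog XY0 : X Y XP YQ maxXY / X :|: Y != set0.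
  move=> core; have [/eqP|] := eqVneq (X :|: Y) set0; last exact: core.
  rewrite setU_eq0 => /andP [/eqP X0 /eqP Y0]; apply: (core P Q) => // p' /maxXY.
  by rewrite X0 Y0 excess0 => /le_trans; apply.
exists X, Y; split=> // [x xX | y yY].
- apply: (excess_setD1 xX).
  apply: (maxXY (X :\ x, Y)); by rewrite /admissible /= YQ (subset_trans (subsetDl _ _) XP).
- apply: (excess_setD1 yY); rewrite excessC [leRHS]excessC.
  apply: (maxXY (X, Y :\ y)); by rewrite /admissible /= XP (subset_trans (subsetDl _ _) YQ).
Qed.

End DenseCore.

Lemma exists_nat_ceil (R : realFieldType) (c : R) (n : nat) :
  0 <= c -> c <= n%:R -> exists m : nat, c <= m%:R < c + 1.
Proof.
move=> c_ge0 c_le_n; have ex_nat : exists p : nat, c <= p%:R by exists n.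
case: (ex_minnP ex_nat) => m c_le_m m_min; exists m; rewrite c_le_m /=.
case: m c_le_m m_min => [|m] _ m_min; first lra.
by rewrite -natr1 ltrD2r ltNge; apply/negP => /m_min; rewrite ltnn.
Qed.

Lemma maxdeg_le (R : realFieldType) (T : finType) (V : {set T}) (r : rel T) (b : R) :
  0 <= b -> {in V, forall v, (deg V r v)%:R <= b} -> (maxdeg V r)%:R <= b.
Proof.
move=> b_ge0 deg_le; rewrite /maxdeg; elim/big_ind: _ => // p q p_le q_le.
by rewrite /maxn; case: ifP.
Qed.

Definition good_subgraph (R : realFieldType) (T : finType) (e : rel T) (k : R) : Prop :=
  exists (VH : {set T}) (rH : rel T) (A B : {set T}),
    [/\ subgraph VH rH [set: T] e,
        bipartite_with VH rH A B,
        k / 4 <= avg_deg R VH rH,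
        (forall v, v \in A -> (deg VH rH v)%:R <= k) &
        (k ^+ 6 * (#|B|)%:R <= (#|A|)%:R \/ (maxdeg VH rH)%:R <= k ^+ 7)].

Section Pruning.
Variables (T : finType) (e : rel T) (X Y : {set T}) (N : T -> {set T}) (m : nat).
Hypotheses (e_sym : symmetric e) (XY_disj : [disjoint X & Y]).
Hypothesis N_nbrs : {in X, forall x, N x \subset [set y in Y | e x y]}.
Hypothesis card_N : {in X, forall x, #|N x| = m}.
Implicit Type S : {set T}.

Definition load y := #|[set x in X | y \in N x]|.

Definition pruned S : rel T := fun x y =>
  [&& x \in X, y \in S & y \in N x] || [&& y \in X, x \in S & x \in N y].

Lemma pruned_sym S : symmetric (pruned S).
Proof. by move=> x y; rewrite /pruned orbC. Qed.

Lemma subgraph_pruned S : subgraph (X :|: S) (pruned S) [set: T] e.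
Proof.
split; [exact: subsetT | exact: pruned_sym | move=> x y].
have N_e u v : u \in X -> v \in N u -> e u v.
  by move=> uX /(subsetP (N_nbrs uX)); rewrite inE => /andP [].
by case/orP=> /and3P [uX vS vN]; rewrite !inE uX vS ?orbT ?(N_e _ _ uX vN) // e_sym N_e.
Qed.

Section PrunedSubset.
Variable S : {set T}.
Hypothesis SY : S \subset Y.

Let XS_disj : [disjoint X & S] := disjointWr SY XY_disj.

Lemma bipartite_pruned : bipartite_with (X :|: S) (pruned S) X S.
Proof.
split=> //; first by apply/eqP; rewrite setI_eq0.
by move=> x y _ _ /orP [] /and3P [-> -> _]; rewrite ?orbT.
Qed.

Lemma deg_pruned_left x : x \in X -> (deg (X :|: S) (pruned S) x <= m)%N.
Proof.
move=> xX; rewrite -(card_N xX); apply/subset_leq_card/subsetP => u.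
by rewrite !inE /pruned xX (disjointFr XS_disj xX) /= andbF orbF => /andP [_ /andP []].
Qed.

Lemma deg_pruned_right y : y \in S -> deg (X :|: S) (pruned S) y = load y.
Proof.
move=> yS; apply: eq_card => u; rewrite !inE /pruned yS (disjointFl XS_disj yS) /=.
by case: (u \in X); rewrite /= ?andbF.
Qed.

Lemma avg_deg_pruned (R : realFieldType) : (0 < #|X|)%N -> (#|S| <= #|X|)%N ->
  (m * #|X| <= 2 * \sum_(y in S) load y)%N -> m%:R / 2 <= avg_deg R (X :|: S) (pruned S).
Proof.
move=> X_gt0 SX half; rewrite (avg_deg_bipartite _ (pruned_sym S) bipartite_pruned).
under eq_bigr => y yS do rewrite deg_pruned_right //.
rewrite ler_pdivlMr ?ltr0n ?addn_gt0 ?X_gt0 // mulrAC ler_pdivrMr ?ltr0n //.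
by rewrite -!natrM ler_nat; nia.
Qed.

End PrunedSubset.

Lemma sum_load : (\sum_(y in Y) load y = m * #|X|)%N.
Proof.
under eq_bigr do rewrite /load cards_sum.
rewrite exchange_big /= mulnC -sum_nat_const; apply: eq_bigr => x xX.
rewrite -(card_N xX) -cards_sum; apply: eq_card => y; rewrite inE.
by apply/andb_idl => /(subsetP (N_nbrs xX)); rewrite inE => /andP [].
Qed.

Lemma good_subgraph_pruned (R : realFieldType) (k : R) :
  2 <= k -> k / 2 <= m%:R <= k -> (0 < #|X|)%N -> (#|Y| <= #|X|)%N -> good_subgraph e k.
Proof.
move=> k_ge2 /andP [km mk] X_gt0 YX; have k_gt0 : 0 < k by lra.
have good S : S \subset Y -> (m * #|X| <= 2 * \sum_(y in S) load y)%N ->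
    k ^+ 6 * #|S|%:R <= #|X|%:R \/ (maxdeg (X :|: S) (pruned S))%:R <= k ^+ 7 ->
    good_subgraph e k.
  move=> SY half alt; exists (X :|: S), (pruned S), X, S; split=> //.
  - exact: subgraph_pruned.
  - exact: bipartite_pruned.
  - have SX : (#|S| <= #|X|)%N := leq_trans (subset_leq_card SY) YX.
    by apply: le_trans _ (avg_deg_pruned SY R X_gt0 SX half); lra.
  - by move=> x xX; apply: le_trans mk; rewrite ler_nat deg_pruned_left.
pose heavy := [set y in Y | k ^+ 7 < (load y)%:R].
have heavyY : heavy \subset Y by apply/subsetP => y; rewrite inE => /andP [].
have split_load : (m * #|X| = \sum_(y in heavy) load y + \sum_(y in Y :\: heavy) load y)%N.
  by rewrite -sum_load (big_setID heavy) /= (setIidPr heavyY).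
have [heavy_half | light_half] := leqP (m * #|X|) (2 * \sum_(y in heavy) load y).
- apply: (good heavy) => //; left; rewrite -(ler_pM2l k_gt0) mulrA -exprS.
  have heavy_load : k ^+ 7 * #|heavy|%:R <= (\sum_(y in heavy) load y)%:R.
    rewrite natr_sum mulr_natr -sumr_const; apply: ler_sum => y.
    by rewrite inE => /andP [_ /ltW].
  have heavy_le : (\sum_(y in heavy) load y)%:R <= m%:R * #|X|%:R :> R.
    by rewrite -natrM split_load ler_nat leq_addr.
  have := ler_wpM2r (ler0n R #|X|) mk; lra.
- apply: (good (Y :\: heavy)); [exact: subsetDl | lia | right].
  have k_le_k7 : k <= k ^+ 7 by apply: ler_eXnr => //; lra.
  apply: maxdeg_le => [|v]; first lra.
  have lightY : Y :\: heavy \subset Y := subsetDl Y heavy.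
  rewrite inE => /orP [vX | v_light].
  + apply: le_trans _ k_le_k7; apply: le_trans _ mk.
    by rewrite ler_nat (deg_pruned_left lightY vX).
  + rewrite (deg_pruned_right lightY v_light).
    by move: v_light; rewrite !inE => /andP [+ vY]; rewrite vY -leNgt.
Qed.

End Pruning.

Lemma good_subgraph_of_min_deg (R : realFieldType) (T : finType) (e : rel T) (k : R)
    (X Y : {set T}) :
  symmetric e -> 2 <= k -> [disjoint X & Y] -> X != set0 -> (#|Y| <= #|X|)%N ->
  {in X, forall x, k / 2 <= (deg Y e x)%:R} -> good_subgraph e k.
Proof.
move=> e_sym k_ge2 XY_disj /set0Pn [x0 x0X] YX degX.
have [|m /andP [km mk]] := exists_nat_ceil _ (degX x0 x0X); first lra.
have m_le_deg x : x \in X -> (m <= deg Y e x)%N.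
  by move=> xX; rewrite -ltnS -(ltr_nat R) -natr1; have := degX x xX; lra.
pose N x := odflt set0 [pick B : {set T} | (B \subset [set y in Y | e x y]) && (#|B| == m)].
have N_spec x : x \in X -> N x \subset [set y in Y | e x y] /\ #|N x| = m.
  move=> xX; rewrite /N; case: pickP => [B /andP [BY /eqP cardB] | no_B] //=.
  have [B BY cardB] := exists_subset_card (m_le_deg x xX).
  by move: (no_B B); rewrite BY cardB eqxx.
apply: (@good_subgraph_pruned _ e X Y N m e_sym XY_disj) => //.
- by move=> x /N_spec [].
- by move=> x /N_spec [].
- by rewrite km /=; lra.
- by rewrite card_gt0; apply/set0Pn; exists x0.
Qed.

Theorem lemma8 (R : realFieldType) (T : finType) (e : rel T) (k : R) :
  simple_graph e -> bipartite [set: T] e -> 2 <= k ->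
  k <= avg_deg R [set: T] e ->
  exists (VH : {set T}) (rH : rel T) (A B : {set T}),
    [/\ subgraph VH rH [set: T] e,
        bipartite_with VH rH A B,
        k / 4 <= avg_deg R VH rH,
        (forall v, v \in A -> (deg VH rH v)%:R <= k) &
        (k ^+ 6 * (#|B|)%:R <= (#|A|)%:R \/ (maxdeg VH rH)%:R <= k ^+ 7)].
Proof.
move=> [e_sym _] [P [Q bip]] k_ge2 k_le_avg.
have [PQ0 PQT _] := bip.
have avgE := avg_deg_bipartite R e_sym bip.
have PQ_gt0 : (0 < #|P| + #|Q|)%N.
  rewrite lt0n; apply: contraTneq k_le_avg => PQ_eq0.
  by rewrite avgE PQ_eq0 invr0 mulr0 -ltNge; lra.
have dense : 0 <= excess e (k / 2) Q P.
  move: k_le_avg; rewrite avgE ler_pdivlMr ?ltr0n // /excess.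
  rewrite (eq_bigr _ (fun q qQ => deg_bipartite bip qQ)) natrM !natrD; lra.
have QP_neq0 : Q :|: P != set0 by rewrite setUC PQT -card_gt0 (card_bipartite bip).
have [X [Y [XQ YP XY_neq0 degX degY]]] := dense_core e_sym QP_neq0 dense.
have XY_disj : [disjoint X & Y].
  by apply: disjointWl XQ (disjointWr YP _); rewrite -setI_eq0 setIC PQ0.
have larger_neq0 (A B : {set T}) : A :|: B != set0 -> (#|B| <= #|A|)%N -> A != set0.
  by rewrite -!card_gt0 cardsU; lia.
have [YX | /ltnW XY] := leqP #|Y| #|X|.
- exact: good_subgraph_of_min_deg e_sym k_ge2 XY_disj (larger_neq0 _ _ XY_neq0 YX) YX degX.
- rewrite setUC in XY_neq0; rewrite disjoint_sym in XY_disj.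
  exact: good_subgraph_of_min_deg e_sym k_ge2 XY_disj (larger_neq0 _ _ XY_neq0 XY) XY degY.
Qed.
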